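(* Let $\mathcal{H}_C$ be a finite-dimensional complex Hilbert space, let $\Pi_1,\dots,\Pi_m$ be mutually orthogonal orthogonal projections on $\mathcal{H}_C$ with $\sum_j\Pi_j=I$, and for each $k\in\mathbb{R}$ let $U_k$ be a unitary operator on $\mathcal{H}_C$. For $0\le p\le1$, $q=1-p$, define the linear map on $L(\mathcal{H}_C)$ $$\mathcal{L}_{k,k',p}(\rho)=qU_k\rho U_{k'}^*+p\sum_{j=1}^m\Pi_jU_k\rho(\Pi_jU_{k'})^*.$$ Say that a linear map satisfies the eigenvalue condition if $1$ is an eigenvalue of it of algebraic multiplicity $1$ and all its other eigenvalues have absolute value strictly less than $1$. If $\mathcal{L}_{k,k,1}$ satisfies the eigenvalue condition, then $\mathcal{L}_{k,k,p}$ satisfies the eigenvalue condition for every $0<p\le1$.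
   Context: $L(\mathcal{H}_C)$ denotes the space of linear operators on $\mathcal{H}_C$ (with the Hilbert–Schmidt inner product). The case $p=0$ corresponds to the coherent (unitary) quantum random walk and $p=1$ to the fully decoherent (open) quantum random walk. *)

(* H_C = C^n with C = R[i] = complex R, R : realType (the reals). *)
From HB Require Import structures.
From mathcomp Require Import all_boot all_order all_algebra.
From mathcomp Require Export complex.
From mathcomp Require Import reals.
Set Implicit Arguments. Unset Strict Implicit. Unset Printing Implicit Defensive.
Import Order.TTheory GRing.Theory Num.Theory.
Local Open Scope ring_scope.
Local Open Scope complex_scope.

Definition adjM (R : rcfType) (n : nat) (A : 'M[R[i]]_n) : 'M[R[i]]_n :=
  (map_mx Num.conj A)^T.

Definition unitary_mx (R : rcfType) (n : nat) (U : 'M[R[i]]_n) : Prop :=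
  U *m adjM U = 1%:M /\ adjM U *m U = 1%:M.

Definition orth_proj (R : rcfType) (n : nat) (P : 'M[R[i]]_n) : Prop :=
  adjM P = P /\ P *m P = P.

Definition Lmap (R : rcfType) (n m : nat) (Pi : 'I_m -> 'M[R[i]]_n)
    (Uk Uk' : 'M[R[i]]_n) (p : R) (rho : 'M[R[i]]_n) : 'M[R[i]]_n :=
  ((1 - p)%:C : R[i]) *: (Uk *m rho *m adjM Uk')
  + (p%:C : R[i]) *: \sum_(j < m) (Pi j *m Uk *m rho *m adjM (Pi j *m Uk')).

(* eigenvalue condition for a linear map f on L(H_C) = 'M_n, via its matrix
   lin_mx f : 'M_(n*n): 1 is an eigenvalue of algebraic multiplicity 1
   (multiplicity as a root of the characteristic polynomial), all other
   eigenvalues have modulus < 1. *)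
Definition eigen_cond (R : rcfType) (n : nat) (f : 'M[R[i]]_n -> 'M[R[i]]_n) : Prop :=
  let A := lin_mx f in
  eigenvalue A 1 /\ mup 1 (char_poly A) = 1%N /\
  (forall lam : R[i], eigenvalue A lam -> lam != 1 -> `|lam| < 1).

From HB Require Import structures.
From mathcomp Require Import all_boot all_order all_algebra.
From mathcomp Require Import complex reals.
From mathcomp Require Import mxred sesquilinear spectral ring.
Import Order.TTheory GRing.Theory Num.Theory.
Local Open Scope ring_scope.
Set Implicit Arguments. Unset Strict Implicit.

(* Write Y = U rho U^*.  Then L_p(rho) = D(Y) + (1 - p) (Y - D(Y)), where the
   pinching D by the projections Pi_j is an orthogonal projection for the
   Hilbert-Schmidt product; hence
     ||L_p rho||^2 + (1 - (1 - p)^2) ||Y - D(Y)||^2 = ||rho||^2.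
   For 0 < p <= 1, L_p is therefore a contraction, and an eigenvector for an
   eigenvalue of modulus >= 1 satisfies Y = D(Y), so that L_p and L_1 agree
   on it: peripheral eigenvalues of L_p are eigenvalues of L_1.  For the
   multiplicity of 1, Schur triangularization shows that a contraction whose
   eigenvalue 1 has algebraic multiplicity >= 2 has two independent fixed
   vectors; these are fixed by L_1 too, which forces multiplicity >= 2 for L_1. *)

Section HilbertSchmidt.
Variable R : rcfType.
Local Notation C := R[i].

Definition adjmx a b (X : 'M[C]_(a, b)) : 'M[C]_(b, a) := (map_mx Num.conj X)^T.

Lemma adjmxM a b c (X : 'M[C]_(a, b)) (Y : 'M[C]_(b, c)) :
  adjmx (X *m Y) = adjmx Y *m adjmx X.
Proof. by rewrite /adjmx map_mxM trmx_mul. Qed.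

Lemma adjmxK a b (X : 'M[C]_(a, b)) : adjmx (adjmx X) = X.
Proof. by apply/matrixP => i j; rewrite !mxE conjCK. Qed.

Lemma adjmxD a b (X Y : 'M[C]_(a, b)) : adjmx (X + Y) = adjmx X + adjmx Y.
Proof. by rewrite /adjmx map_mxD linearD. Qed.

Lemma adjmxN a b (X : 'M[C]_(a, b)) : adjmx (- X) = - adjmx X.
Proof. by apply/matrixP => i j; rewrite !mxE rmorphN. Qed.

Lemma adjmxZ a b c (X : 'M[C]_(a, b)) : adjmx (c *: X) = Num.conj c *: adjmx X.
Proof. by rewrite /adjmx map_mxZ linearZ. Qed.

Definition hsdot a b (X Y : 'M[C]_(a, b)) : C := \tr (X *m adjmx Y).

Lemma hsdotDl a b (X Y Z : 'M[C]_(a, b)) : hsdot (X + Y) Z = hsdot X Z + hsdot Y Z.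
Proof. by rewrite /hsdot mulmxDl mxtraceD. Qed.

Lemma hsdotDr a b (X Y Z : 'M[C]_(a, b)) : hsdot Z (X + Y) = hsdot Z X + hsdot Z Y.
Proof. by rewrite /hsdot adjmxD mulmxDr mxtraceD. Qed.

Lemma hsdotNl a b (X Z : 'M[C]_(a, b)) : hsdot (- X) Z = - hsdot X Z.
Proof. by rewrite /hsdot mulNmx linearN. Qed.

Lemma hsdotNr a b (X Z : 'M[C]_(a, b)) : hsdot Z (- X) = - hsdot Z X.
Proof. by rewrite /hsdot adjmxN mulmxN linearN. Qed.

Lemma hsdotZl a b c (X Z : 'M[C]_(a, b)) : hsdot (c *: X) Z = c * hsdot X Z.
Proof. by rewrite /hsdot -scalemxAl mxtraceZ. Qed.

Lemma hsdotZr a b c (X Z : 'M[C]_(a, b)) : hsdot Z (c *: X) = Num.conj c * hsdot Z X.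
Proof. by rewrite /hsdot adjmxZ -scalemxAr mxtraceZ. Qed.

Lemma hsdot_suml a b I (r : seq I) (P : pred I) (F : I -> 'M[C]_(a, b)) Z :
  hsdot (\sum_(i <- r | P i) F i) Z = \sum_(i <- r | P i) hsdot (F i) Z.
Proof.
elim/big_rec2: _ => [|i y1 y2 _ <-]; last by rewrite hsdotDl.
by rewrite /hsdot mul0mx mxtrace0.
Qed.

Lemma hsdot_sumr a b I (r : seq I) (P : pred I) (F : I -> 'M[C]_(a, b)) Z :
  hsdot Z (\sum_(i <- r | P i) F i) = \sum_(i <- r | P i) hsdot Z (F i).
Proof.
elim/big_rec2: _ => [|i y1 y2 _ <-]; last by rewrite hsdotDr.
by rewrite /hsdot /adjmx map_mx0 trmx0 mulmx0 mxtrace0.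
Qed.

Lemma hsdot_mulmxl a b c (A : 'M[C]_(a, b)) (X : 'M[C]_(b, c)) Y :
  hsdot (A *m X) Y = hsdot X (adjmx A *m Y).
Proof. by rewrite /hsdot adjmxM adjmxK -mulmxA mxtrace_mulC mulmxA. Qed.

Lemma hsdot_mulmxr a b c (X : 'M[C]_(a, b)) (A : 'M[C]_(b, c)) Y :
  hsdot (X *m A) Y = hsdot X (Y *m adjmx A).
Proof. by rewrite /hsdot adjmxM adjmxK mulmxA. Qed.

Lemma hsdot_unitaryr a b (X : 'M[C]_(a, b)) (U : 'M[C]_b) :
  U *m adjmx U = 1%:M -> hsdot (X *m U) (X *m U) = hsdot X X.
Proof. by move=> UU; rewrite hsdot_mulmxr -mulmxA UU mulmx1. Qed.

Lemma hsdot_selfE a b (X : 'M[C]_(a, b)) :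
  hsdot X X = \sum_i \sum_j `|X i j| ^+ 2.
Proof.
apply: eq_bigr => i _; rewrite mxE.
by apply: eq_bigr => j _; rewrite !mxE normCK.
Qed.

Lemma hsdot_self_ge0 a b (X : 'M[C]_(a, b)) : 0 <= hsdot X X.
Proof.
by rewrite hsdot_selfE sumr_ge0 // => i _; rewrite sumr_ge0 // => j _; rewrite exprn_ge0.
Qed.

Lemma hsdot_self_eq0 a b (X : 'M[C]_(a, b)) : hsdot X X = 0 -> X = 0.
Proof.
have sq_ge0 i j : 0 <= `|X i j| ^+ 2 by rewrite exprn_ge0.
rewrite hsdot_selfE => /psumr_eq0P X0; apply/matrixP => i j; rewrite mxE.
have /psumr_eq0P Xi0 := X0 (fun k _ => sumr_ge0 _ (fun l _ => sq_ge0 k l)) i isT.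
by move/(_ (fun l _ => sq_ge0 i l) j isT)/eqP: Xi0; rewrite sqrf_eq0 normr_eq0 => /eqP.
Qed.

Lemma hsdot_mxvec a b (X : 'M[C]_(a, b)) : hsdot (mxvec X) (mxvec X) = hsdot X X.
Proof.
rewrite !hsdot_selfE big_ord1 (reindex _ (curry_mxvec_bij a b)) /= pair_big /=.
by apply: eq_bigr => -[i j] _ /=; rewrite mxvecE.
Qed.

End HilbertSchmidt.

Section LinearMaps.
Variables (F : fieldType) (a b : nat) (f : 'M[F]_(a, b) -> 'M[F]_(a, b)).
Hypothesis f_linear : linear f.

Lemma mul_rV_lin_mx u : u *m lin_mx f = mxvec (f (vec_mx u)).
Proof.
pose g : {linear 'M[F]_(a, b) -> 'M[F]_(a, b)} :=
  HB.pack f (GRing.isLinear.Build _ _ _ _ f f_linear).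
exact: (mul_rV_lin g).
Qed.

Lemma lin_mx_eigenvectorE c u :
  u *m lin_mx f = c *: u <-> f (vec_mx u) = c *: vec_mx u.
Proof.
rewrite mul_rV_lin_mx; split => [/(congr1 vec_mx)|->].
  by rewrite mxvecK linearZ.
by rewrite linearZ /= vec_mxK.
Qed.

Lemma eigenvalue_lin_mxP c :
  eigenvalue (lin_mx f) c <-> exists2 X, f X = c *: X & X != 0.
Proof.
split => [/eigenvalueP[u /lin_mx_eigenvectorE fu u0]|[X fX X0]].
  by exists (vec_mx u); rewrite // vec_mx_eq0.
apply/eigenvalueP; exists (mxvec X); last by rewrite mxvec_eq0.
by apply/lin_mx_eigenvectorE; rewrite mxvecK.
Qed.

End LinearMaps.

Section TriangularEigen.
Variables (F : fieldType) (N : nat) (T : 'M[F]_N).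
Hypothesis T_trig : is_trig_mx T.

Lemma mup_char_poly_trig a :
  mup a (char_poly T) = count (fun i => T i i == a) (index_enum 'I_N).
Proof.
rewrite char_poly_trig //.
rewrite -(big_map (fun i => T i i) xpredT (fun y => 'X - y%:P)) mu_prod_XsubC.
by rewrite count_map; apply: eq_count => i /=; rewrite eq_sym.
Qed.

(* The witness is the last nonzero coordinate of [v]; [T] is lower triangular. *)
Lemma trig_eigenvector_diag a (v : 'rV[F]_N) :
  v *m T = a *: v -> v != 0 -> exists2 i, v 0 i != 0 & T i i = a.
Proof.
move=> vT v0; have /is_trig_mxP T0 := T_trig.
have [i0 vi0] : exists i, v 0 i != 0.
  apply/existsP; apply: contraNT v0 => /existsPn v0.
  by apply/eqP/rowP => i; rewrite mxE; apply/eqP/negPn.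
have [i vi imax] := @arg_maxnP _ i0 (fun i => v 0 i != 0) val vi0.
exists i => //; apply: (mulIf vi); move/rowP/(_ i): vT; rewrite !mxE mulrC => <-.
rewrite (bigD1 i) //= big1 ?addr0 ?[v 0 i * _]mulrC // => k ki.
case: (ltngtP k i) => [lt_ki|lt_ik|/val_inj eki]; last by rewrite eki eqxx in ki.
- by rewrite T0 // mulr0.
- have /eqP -> : v 0 k == 0 by apply: contraTT lt_ik => /imax; rewrite -leqNgt.
  by rewrite mul0r.
Qed.

Lemma trig_eigen_pair a (v w : 'rV[F]_N) :
  v *m T = a *: v -> w *m T = a *: w -> v != 0 -> (forall c, w != c *: v) ->
  exists i j, [/\ i != j, T i i = a & T j j = a].
Proof.
move=> vT wT v0 wv.
have [i vi Tii] := trig_eigenvector_diag vT v0.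
pose w' := w - (w 0 i / v 0 i) *: v.
have w'T : w' *m T = a *: w'.
  by rewrite mulmxBl -scalemxAl vT wT scalerBr !scalerA mulrC.
have [|j w'j Tjj] := trig_eigenvector_diag w'T; first by rewrite subr_eq0.
exists i, j; split => //; apply: contraNneq w'j => <-.
by rewrite !mxE divfK // subrr.
Qed.

End TriangularEigen.

Lemma char_poly_conj (R : comNzRingType) N (A P Q : 'M[R]_N) :
  P *m Q = 1%:M -> char_poly (P *m A *m Q) = char_poly A.
Proof.
move=> PQ; rewrite /char_poly /char_poly_mx !map_mxM.
set f := map_mx _.
have fPQ : f P *m f Q = 1%:M by rewrite -map_mxM PQ map_mx1.
have -> : 'X%:M - f P *m f A *m f Q = f P *m ('X%:M - f A) *m f Q.
  by rewrite mulmxBr mulmxBl mul_mx_scalar -scalemxAl fPQ scalemx1.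
by rewrite !det_mulmx mulrAC -det_mulmx fPQ det1 mul1r.
Qed.

Lemma count_gt1_pair (T : eqType) (a : pred T) (s : seq T) :
  uniq s -> (1 < count a s)%N -> exists x y, [/\ x != y, a x & a y].
Proof.
move=> /(filter_uniq a); rewrite -size_filter.
have : forall x, x \in filter a s -> a x by move=> x; rewrite mem_filter => /andP[].
case: filter => [|x [|y t]] // axy /andP[]; rewrite inE negb_or => /andP[xy _] _ _.
by exists x, y; rewrite xy !axy ?inE ?eqxx ?orbT.
Qed.

Section Contraction.
Variable R : rcfType.
Local Notation C := R[i].

Lemma Schur_adjmx N (A : 'M[C]_N.+1) : exists P : 'M[C]_N.+1,
  [/\ P *m adjmx P = 1%:M, adjmx P *m P = 1%:M &
      is_trig_mx (P *m A *m adjmx P)].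
Proof.
have [P Pu] := Schur A (ltn0Sn N).
have adjPE : (P ^t* )%sesqui = adjmx P by rewrite /adjmx map_trmx.
rewrite /similar_to conjumx ?unitarymx_unit // invmx_unitary // adjPE => Ptrig.
have PP : P *m adjmx P = 1%:M by rewrite -adjPE; apply/unitarymxP.
by exists P; split => //; apply: mulmx1C.
Qed.

Lemma eigen_pair_mup_gt1 N (B : 'M[C]_N) a (v w : 'rV[C]_N) :
  v *m B = a *: v -> w *m B = a *: w -> v != 0 -> (forall c, w != c *: v) ->
  (1 < mup a (char_poly B))%N.
Proof.
case: N B v w => [|N] B v w vB wB v0 wv.
  by case/eqP: v0; apply/rowP => -[].
have [P [PP1 PP2 Ttrig]] := Schur_adjmx B.
set T := P *m B *m adjmx P in Ttrig.
have vecT (x : 'rV_N.+1) : x *m B = a *: x -> x *m adjmx P *m T = a *: (x *m adjmx P).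
  by move=> xB; rewrite /T !mulmxA -(mulmxA x) PP2 mulmx1 xB scalemxAl.
have back (x : 'rV_N.+1) : x *m adjmx P *m P = x by rewrite -mulmxA PP2 mulmx1.
have [||i [j [ij Tii Tjj]]] := trig_eigen_pair Ttrig (vecT _ vB) (vecT _ wB).
- by apply: contraNneq v0 => h; rewrite -[v]back h mul0mx.
- by move=> c; apply: contraNneq (wv c) => h; rewrite -[w]back h -scalemxAl back.
rewrite -(char_poly_conj B PP1) -/T mup_char_poly_trig //.
rewrite -sum1_count (bigD1 i) ?Tii ?eqxx //= (bigD1 j) /= ?Tjj ?eqxx 1?eq_sym //.
Qed.

Definition contraction N (A : 'M[C]_N) :=
  forall u : 'rV_N, hsdot (u *m A) (u *m A) <= hsdot u u.

Lemma contraction_conj N (A P : 'M[C]_N) :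
  contraction A -> P *m adjmx P = 1%:M -> adjmx P *m P = 1%:M ->
  contraction (P *m A *m adjmx P).
Proof.
move=> Ac PP1 PP2 u; rewrite !mulmxA hsdot_unitaryr ?adjmxK //.
by rewrite -[hsdot u u](hsdot_unitaryr u PP1).
Qed.

(* Row [k] of [T] has norm at most 1 and already contains [T k k = 1]. *)
Lemma contraction_unit_diag N (T : 'M[C]_N) k :
  contraction T -> T k k = 1 -> delta_mx 0 k *m T = delta_mx 0 k :> 'rV_N.
Proof.
move=> Tc Tkk; have := Tc (delta_mx 0 k); rewrite -rowE !hsdot_selfE !big_ord1.
have -> : \sum_j `|(delta_mx 0 k : 'rV[C]_N) 0 j| ^+ 2 = 1.
  rewrite (bigD1 k) //= big1 => [|j jk]; first by rewrite mxE !eqxx normr1 expr1n addr0.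
  by rewrite mxE eqxx /= (negbTE jk) normr0 expr0n.
rewrite (bigD1 k) //= mxE Tkk normr1 expr1n -[X in _ <= X]addr0 lerD2l => S_le0.
have S0 : \sum_(j | j != k) `|row k T 0 j| ^+ 2 = 0.
  by apply/le_anti; rewrite S_le0 sumr_ge0 // => j _; rewrite exprn_ge0.
apply/rowP => j; rewrite !mxE eqxx /=; have [<-|kj] := eqVneq k j; first by rewrite Tkk.
have := psumr_eq0P (fun j _ => exprn_ge0 2 (normr_ge0 (row k T 0 j))) S0.
by move=> /(_ j); rewrite eq_sym kj mxE => /(_ isT)/eqP; rewrite sqrf_eq0 normr_eq0 => /eqP.
Qed.

Lemma contraction_fixed_pair N (A : 'M[C]_N) :
  contraction A -> (1 < mup 1 (char_poly A))%N ->
  exists v w : 'rV[C]_N, [/\ v *m A = v, w *m A = w, v != 0 & forall c, w != c *: v].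
Proof.
case: N A => [|N] A Ac; first by rewrite /char_poly det_mx00 mupNroot // root1.
have [P [PP1 PP2 Ttrig]] := Schur_adjmx A.
set T := P *m A *m adjmx P in Ttrig.
rewrite -(char_poly_conj A PP1) -/T mup_char_poly_trig // => /(count_gt1_pair (index_enum_uniq _)).
move=> [i [j [ij /eqP Tii /eqP Tjj]]].
have Tc : contraction T by apply: contraction_conj.
have fixed k (e := delta_mx 0 k : 'rV_N.+1) : T k k = 1 -> e *m P *m A = e *m P.
  move=> /(contraction_unit_diag Tc) /(congr1 (mulmx^~ P)).
  by rewrite /T !mulmxA -(mulmxA _ (adjmx P)) PP2 mulmx1.
have back (x : 'rV_N.+1) : x *m P *m adjmx P = x by rewrite -mulmxA PP1 mulmx1.
exists (delta_mx 0 i *m P), (delta_mx 0 j *m P); split; [exact: fixed|exact: fixed| |].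
  apply: contraTneq isT => /(congr1 (mulmx^~ (adjmx P))); rewrite back mul0mx.
  by move/rowP/(_ i); rewrite !mxE !eqxx => /eqP; rewrite oner_eq0.
move=> c; apply: contraTneq isT => /(congr1 (mulmx^~ (adjmx P))).
rewrite -scalemxAl !back => /rowP/(_ j); rewrite !mxE !eqxx eq_sym (negbTE ij) mulr0.
by move/eqP; rewrite oner_eq0.
Qed.

End Contraction.

Lemma Lmap_linear (R : rcfType) n m (Pi : 'I_m -> 'M[R[i]]_n) Uk Uk' p :
  linear (Lmap Pi Uk Uk' p).
Proof.
move=> a X Y; rewrite /Lmap.
have E (A B : 'M[R[i]]_n) : A *m (a *: X + Y) *m B = a *: (A *m X *m B) + A *m Y *m B.
  by rewrite mulmxDr mulmxDl -scalemxAr -scalemxAl.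
rewrite E; under eq_bigr do rewrite E.
rewrite big_split /= -scaler_sumr !scalerDr !scalerA (mulrC a) (mulrC a) -!scalerA.
by rewrite addrACA.
Qed.

Lemma eigenvalue_mup_gt0 (F : fieldType) N (A : 'M[F]_N) a :
  eigenvalue A a -> (0 < mup a (char_poly A))%N.
Proof.
by rewrite mup_geq ?monic_neq0 ?char_poly_monic // expr1 dvdp_XsubCl -eigenvalue_root_char.
Qed.

Section PinchedWalk.
Variable R : rcfType.
Local Notation C := R[i].
Local Open Scope complex_scope.
Variables (n m : nat) (Pi : 'I_m -> 'M[C]_n) (U : 'M[C]_n).
Hypothesis Pi_proj : forall j, orth_proj (Pi j).
Hypothesis Pi_orth : forall j j', j != j' -> Pi j *m Pi j' = 0.
Hypothesis Pi_sum : \sum_(j < m) Pi j = 1%:M.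
Hypothesis U_unitary : unitary_mx U.

Let Pi_adj j : adjmx (Pi j) = Pi j := (Pi_proj j).1.
Let Pi_idem j : Pi j *m Pi j = Pi j := (Pi_proj j).2.

Definition pinching (Y : 'M[C]_n) := \sum_(j < m) Pi j *m Y *m Pi j.
Definition offdiag (Y : 'M[C]_n) := Y - pinching Y.

Lemma hsdot_pinching Y Z : hsdot (pinching Y) Z = hsdot Y (pinching Z).
Proof.
rewrite hsdot_suml hsdot_sumr; apply: eq_bigr => j _.
by rewrite hsdot_mulmxr hsdot_mulmxl !Pi_adj mulmxA.
Qed.

Lemma pinching_idem Y : pinching (pinching Y) = pinching Y.
Proof.
apply: eq_bigr => j _; rewrite mulmx_sumr mulmx_suml (bigD1 j) //= big1 ?addr0.
  by rewrite !mulmxA Pi_idem -!mulmxA Pi_idem.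
by move=> k kj; rewrite !mulmxA Pi_orth 1?eq_sym // !mul0mx.
Qed.

Lemma hsdot_pinching_offdiag Y Z : hsdot (pinching Y) (offdiag Z) = 0.
Proof. by rewrite hsdotDr hsdotNr !hsdot_pinching pinching_idem subrr. Qed.

Lemma hsdot_offdiag_pinching Y Z : hsdot (offdiag Y) (pinching Z) = 0.
Proof. by rewrite hsdotDl hsdotNl hsdot_pinching pinching_idem subrr. Qed.

Lemma hsdot_offdiag Y :
  hsdot Y Y = hsdot (pinching Y) (pinching Y) + hsdot (offdiag Y) (offdiag Y).
Proof.
have YE : Y = pinching Y + offdiag Y by rewrite addrC subrK.
move: (offdiag Y) YE (hsdot_pinching_offdiag Y Y) (hsdot_offdiag_pinching Y Y).
by move=> E YE DE ED; rewrite {1 2}YE !(hsdotDl, hsdotDr) DE ED addr0 add0r.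
Qed.

Lemma hsdot_unitary_conj X :
  hsdot (U *m X *m adjmx U) (U *m X *m adjmx U) = hsdot X X.
Proof.
rewrite hsdot_unitaryr ?adjmxK; last exact: U_unitary.2.
by rewrite hsdot_mulmxl mulmxA U_unitary.2 mul1mx.
Qed.

Lemma Lmap_decomp p X :
  Lmap Pi U U p X =
  pinching (U *m X *m adjmx U) + (1 - p)%:C *: offdiag (U *m X *m adjmx U).
Proof.
set Y := U *m X *m adjmx U; rewrite /Lmap /offdiag.
have -> : \sum_(j < m) Pi j *m U *m X *m adjM (Pi j *m U) = pinching Y.
  by apply: eq_bigr => j _; rewrite [adjM _]adjmxM Pi_adj !mulmxA.
have -> : p%:C = 1 - (1 - p)%:C :> C by rewrite rmorphB rmorph1 opprB addrC subrK.
by rewrite scalerBr scalerBl scale1r addrCA.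
Qed.

Lemma hsdot_Lmap p X (E := offdiag (U *m X *m adjmx U)) :
  hsdot (Lmap Pi U U p X) (Lmap Pi U U p X) + (1 - (1 - p) ^+ 2)%:C * hsdot E E
  = hsdot X X.
Proof.
rewrite Lmap_decomp -(hsdot_unitary_conj X) /E; set Y := U *m X *m adjmx U.
rewrite [RHS]hsdot_offdiag.
have qE : Num.conj ((1 - p)%:C : C) = (1 - p)%:C.
  by apply/eqP; rewrite eq_complex /= oppr0 !eqxx.
move: (offdiag Y) (hsdot_pinching_offdiag Y Y) (hsdot_offdiag_pinching Y Y) => F DF FD.
rewrite !(hsdotDl, hsdotDr, hsdotZl, hsdotZr) qE DF FD !mulr0 !addr0 !add0r.
have -> : (1 - (1 - p) ^+ 2)%:C = 1 - ((1 - p)%:C) ^+ 2 :> C.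
  by rewrite rmorphB rmorph1 rmorphXn.
by ring.
Qed.

Lemma Lmap_id p : Lmap Pi U U p 1%:M = 1%:M.
Proof.
rewrite Lmap_decomp mulmx1 U_unitary.1 /offdiag.
have -> : pinching 1%:M = 1%:M.
  by rewrite -[RHS]Pi_sum; apply: eq_bigr => j _; rewrite mulmx1 Pi_idem.
by rewrite subrr scaler0 addr0.
Qed.

Lemma eigenvalue1_Lmap p q :
  eigenvalue (lin_mx (Lmap Pi U U p)) 1 -> eigenvalue (lin_mx (Lmap Pi U U q)) 1.
Proof.
move=> /(eigenvalue_lin_mxP (Lmap_linear _ _ _ _)) [X _ X0].
apply/(eigenvalue_lin_mxP (Lmap_linear _ _ _ _)); exists 1%:M; first by rewrite scale1r Lmap_id.
by apply: contraNneq X0 => id0; rewrite -[X]mulmx1 id0 mulmx0.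
Qed.

End PinchedWalk.

Section Peripheral.
Variable R : rcfType.
Local Notation C := R[i].
Local Open Scope complex_scope.
Variables (n m : nat) (Pi : 'I_m -> 'M[C]_n) (U : 'M[C]_n) (p : R).
Hypothesis Pi_proj : forall j, orth_proj (Pi j).
Hypothesis Pi_orth : forall j j', j != j' -> Pi j *m Pi j' = 0.
Hypothesis U_unitary : unitary_mx U.
Hypotheses (p_gt0 : 0 < p) (p_le1 : p <= 1).

Let c_gt0 : 0 < (1 - (1 - p) ^+ 2)%:C :> C.
Proof.
have -> : 1 - (1 - p) ^+ 2 = p * (2 - p) by ring.
by rewrite ltcR mulr_gt0 // subr_gt0 (le_lt_trans p_le1) // ltr1n.
Qed.

Lemma Lmap_lin_contraction : contraction (lin_mx (Lmap Pi U U p)).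
Proof.
move=> u; rewrite mul_rV_lin_mx ?hsdot_mxvec; last exact: Lmap_linear.
rewrite -[in X in _ <= X](vec_mxK u) hsdot_mxvec.
rewrite -(hsdot_Lmap Pi_proj Pi_orth U_unitary p (vec_mx u)) lerDl.
by rewrite mulr_ge0 ?hsdot_self_ge0 ?ltW.
Qed.

(* An eigenvector for an eigenvalue on or outside the unit circle loses no
   norm, so its off-diagonal part vanishes and [p] becomes irrelevant. *)
Lemma Lmap_peripheral_eigen X lam :
  Lmap Pi U U p X = lam *: X -> 1 <= `|lam| -> Lmap Pi U U 1 X = lam *: X.
Proof.
move=> LX lam_ge1.
have := hsdot_Lmap Pi_proj Pi_orth U_unitary p X.
set E := offdiag _ _; rewrite LX hsdotZl hsdotZr mulrA -normCK => balance.
have cE : (1 - (1 - p) ^+ 2)%:C * hsdot E E = (1 - `|lam| ^+ 2) * hsdot X X.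
  by apply: (addrI (`|lam| ^+ 2 * hsdot X X)); rewrite balance; ring.
have E0 : hsdot E E = 0.
  have cE_ge0 := mulr_ge0 (ltW c_gt0) (hsdot_self_ge0 E).
  have cE_le0 : (1 - (1 - p) ^+ 2)%:C * hsdot E E <= 0.
    by rewrite cE mulr_le0_ge0 ?hsdot_self_ge0 // subr_le0 exprn_ege1.
  have /eqP : (1 - (1 - p) ^+ 2)%:C * hsdot E E = 0 by apply/le_anti; rewrite cE_le0.
  by rewrite mulf_eq0 gt_eqF // => /eqP.
by rewrite -LX !(Lmap_decomp _ Pi_proj) -/E (hsdot_self_eq0 E0) !scaler0.
Qed.

Lemma eigenvalue_Lmap_peripheral lam :
  eigenvalue (lin_mx (Lmap Pi U U p)) lam -> 1 <= `|lam| ->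
  eigenvalue (lin_mx (Lmap Pi U U 1)) lam.
Proof.
move=> /(eigenvalue_lin_mxP (Lmap_linear _ _ _ _)) [X LX X0] lam_ge1.
by apply/(eigenvalue_lin_mxP (Lmap_linear _ _ _ _)); exists X; first exact: Lmap_peripheral_eigen.
Qed.

Lemma mup1_Lmap_gt1 :
  (1 < mup 1 (char_poly (lin_mx (Lmap Pi U U p))))%N ->
  (1 < mup 1 (char_poly (lin_mx (Lmap Pi U U 1))))%N.
Proof.
have fixed1 (x : 'rV_(n * n)) :
    x *m lin_mx (Lmap Pi U U p) = x -> x *m lin_mx (Lmap Pi U U 1) = 1 *: x.
  move=> xL; apply/(lin_mx_eigenvectorE (Lmap_linear _ _ _ _)).
  apply: Lmap_peripheral_eigen; last by rewrite normr1.
  by apply/(lin_mx_eigenvectorE (Lmap_linear _ _ _ _)); rewrite scale1r.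
move=> /(contraction_fixed_pair Lmap_lin_contraction) [v [w [vL wL v0 wv]]].
exact: eigen_pair_mup_gt1 (fixed1 _ vL) (fixed1 _ wL) v0 wv.
Qed.

End Peripheral.

Theorem mainTheorem6 (R : realType) (n m : nat) (Pi : 'I_m -> 'M[R[i]]_n)
    (U : R -> 'M[R[i]]_n) (k : R) :
  (forall j, orth_proj (Pi j)) ->
  (forall j j', j != j' -> Pi j *m Pi j' = 0) ->
  \sum_(j < m) Pi j = 1%:M ->
  (forall k0 : R, unitary_mx (U k0)) ->
  eigen_cond (Lmap Pi (U k) (U k) 1) ->
  forall p : R, 0 < p -> p <= 1 -> eigen_cond (Lmap Pi (U k) (U k) p).
Proof.
move=> Pi_proj Pi_orth Pi_sum U_unitary [ev1 [mup1 lt1]] p p_gt0 p_le1.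
have Uk := U_unitary k.
have ev1p := eigenvalue1_Lmap Pi_proj Pi_sum Uk p ev1.
split; [exact: ev1p | split].
- apply/eqP; rewrite eqn_leq (eigenvalue_mup_gt0 ev1p) andbT leqNgt.
  by apply: contraTN isT => /(mup1_Lmap_gt1 Pi_proj Pi_orth Uk p_gt0 p_le1); rewrite mup1.
- move=> lam ev lam_neq1; rewrite real_ltNge ?normr_real //; apply/negP => lam_ge1.
  have := eigenvalue_Lmap_peripheral Pi_proj Pi_orth Uk p_gt0 p_le1 ev lam_ge1.
  by move=> /lt1 /(_ lam_neq1) /lt_le_trans /(_ lam_ge1); rewrite ltxx.
Qed.
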